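(* Let $(\mathcal G_{yz},\beta)$ be obtained from $(\mathcal G_x,\alpha)$ by decomposing the node $x$ into $y$ and $z$, and assume the FCFS chains $W_x$ and $W_{yz}$ are positive recurrent. Let $\mathbb E[Q_x]$ and $\mathbb E[Q_{yz}]$ be the stationary mean word lengths (mean numbers of items) of $W_x$ and $W_{yz}$. Then $\mathbb E[Q_x]=\mathbb E[Q_{yz}]$.
   Context: A matching model consists of a finite connected simple graph and an arrival distribution on its nodes with positive entries. Under FCFS, the state is the word of unmatched item classes in order of arrival; an arriving item of class $i$ deletes the oldest letter of the word that is a neighbour of $i$, and if there is none $i$ is appended. Decomposition: given $\mathcal G_x=(\mathcal V,\xi)$ with node $x$ and arrival distribution $\alpha$, $\mathcal G_{yz}$ has node set $(\mathcal V\setminus\{x\})\cup\{y,z\}$ with $y,z$ new nodes; edges among $\mathcal V\setminus\{x\}$ are as in $\mathcal G_x$, each of $y$ and $z$ is adjacent exactly to the neighbours of $x$ in $\mathcal G_x$ (so $y,z$ are not adjacent), and the arrival distribution $\beta$ satisfies $\beta_y>0$, $\beta_z>0$, $\beta_y+\beta_z=\alpha_x$, $\beta_i=\alpha_i$ for $i\ne x$. *)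

From HB Require Import structures.
From mathcomp Require Import all_boot all_order all_algebra.
From mathcomp Require Import all_classical all_reals all_analysis.
Set Implicit Arguments. Unset Strict Implicit. Unset Printing Implicit Defensive.
Import Order.TTheory GRing.Theory Num.Theory.
Local Open Scope ring_scope.
Local Open Scope classical_set_scope.

Section MatchingModel.
Variables (R : realType) (V : finType).

Definition matching_model (e : rel V) (alpha : V -> R) : Prop :=
  [/\ symmetric e, irreflexive e, (forall u v, connect e u v),
      (forall v, 0 < alpha v) & \sum_(v : V) alpha v = 1].

(* FCFS dynamics: an arriving item of class i deletes the oldest letter of the
   word w that is a neighbour of i; if there is none, i is appended. *)
Definition fcfs_step (e : rel V) (w : seq V) (i : V) : seq V :=
  let k := find (e i) w in
  if (k < size w)%N then take k w ++ drop k.+1 w else rcons w i.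

Definition fcfs_trans (e : rel V) (alpha : V -> R) (w w' : seq V) : R :=
  \sum_(i : V | fcfs_step e w i == w') alpha i.

(* hit_prob n w = probability that the chain started at w hits the empty word
   for the first time at time exactly n. *)
Fixpoint hit_prob (e : rel V) (alpha : V -> R) (n : nat) (w : seq V) : R :=
  match n with
  | 0 => (w == [::])%:R
  | n'.+1 => if w == [::] then 0
             else \sum_(i : V) alpha i * hit_prob e alpha n' (fcfs_step e w i)
  end.

(* return_prob n = probability that the chain started at the empty word
   returns to the empty word for the first time at time exactly n (n >= 1). *)
Definition return_prob (e : rel V) (alpha : V -> R) (n : nat) : R :=
  match n with
  | 0 => 0
  | n'.+1 => \sum_(i : V) alpha i * hit_prob e alpha n' (fcfs_step e [::] i)
  end.

(* Positive recurrence of the FCFS chain (at the empty word, which is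
   reachable from every state): the return time to the empty word is a.s.
   finite and has finite expectation. *)
Definition positive_recurrent (e : rel V) (alpha : V -> R) : Prop :=
  ((\sum_(n <oo) (return_prob e alpha n)%:E) = 1)%E /\
  ((\sum_(n <oo) ((n%:R * return_prob e alpha n)%:E)) < +oo)%E.

Definition stationary (e : rel V) (alpha : V -> R) (pi : seq V -> R) : Prop :=
  [/\ (forall w, 0 <= pi w),
      (\esum_(w in [set: seq V]) (pi w)%:E = 1)%E &
      (forall w', (pi w')%:E =
         \esum_(w in [set: seq V]) (pi w * fcfs_trans e alpha w w')%:E)].

Definition mean_length (pi : seq V -> R) : \bar R :=
  \esum_(w in [set: seq V]) (pi w * (size w)%:R)%:E.

End MatchingModel.

(* (G_yz, beta) on node type U is obtained from (G_x, alpha) on node type V by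
   decomposing x into y and z: phi : U -> V sends y and z to x and is a
   bijection from U \ {y,z} onto V \ {x}; adjacency is pulled back along phi
   (so y, z are adjacent exactly to the neighbours of x, and not to each other
   since e_x is irreflexive); beta_y, beta_z > 0, beta_y + beta_z = alpha_x,
   beta_u = alpha_(phi u) otherwise. *)
Definition decomposition (R : realType) (V U : finType)
    (ex : rel V) (alpha : V -> R) (x : V)
    (eyz : rel U) (beta : U -> R) (y z : U) : Prop :=
  exists phi : U -> V,
    [/\ y != z, phi y = x, phi z = x &
        (forall u, phi u = x -> u = y \/ u = z)] /\
    [/\ {in [pred u | phi u != x] &, injective phi},
        (forall v, v != x -> exists u, phi u = v) &
        (forall u u', eyz u u' = ex (phi u) (phi u'))] /\
    [/\ 0 < beta y, 0 < beta z, beta y + beta z = alpha x &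
        (forall u, phi u != x -> beta u = alpha (phi u))].

From HB Require Import structures.
From mathcomp Require Import all_boot all_order all_algebra.
From mathcomp Require Import all_classical all_reals all_analysis.
Set Implicit Arguments. Unset Strict Implicit. Unset Printing Implicit Defensive.
Import Order.TTheory GRing.Theory Num.Theory.
Local Open Scope ring_scope.
Local Open Scope classical_set_scope.

(* Idea: relabelling every letter y or z of a word as x maps the FCFS chain
   W_yz onto W_x.  Indeed FCFS commutes with this relabelling (y and z have
   exactly the neighbours of x), and the arrival rates of the preimages of a
   class sum to its rate, so the chain W_yz is lumpable onto W_x.  Hence the
   image of the stationary distribution of W_yz is stationary for W_x.  As
   every class has a neighbour, the empty word is reachable from every word of
   W_x, which makes its stationary distribution unique; so it is this image,
   and relabelling preserves word lengths. *)

Section NonnegativeSums.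
Local Open Scope ereal_scope.
Variable R : realType.

Lemma esum_swap (A B : choiceType) (a : A -> B -> \bar R) :
  (forall i j, 0 <= a i j) ->
  \esum_(i in [set: A]) \esum_(j in [set: B]) a i j =
  \esum_(j in [set: B]) \esum_(i in [set: A]) a i j.
Proof.
move=> a0; rewrite !esum_esum//.
have -> : [set: A] `*`` (fun=> [set: B]) = [set: A * B].
  by apply/seteqP; split => // -[].
have -> : [set: B] `*`` (fun=> [set: A]) = [set: B * A].
  by apply/seteqP; split => // -[].
rewrite (reindex_esum [set: A * B] [set: B * A] (fun k => (k.2, k.1))) //.
by rewrite setTT_bijective; exists (fun k => (k.2, k.1)); case.
Qed.

Lemma esumZl (T : choiceType) (r : R) (a : T -> \bar R) :
  (0 <= r)%R -> (forall i, 0 <= a i) ->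
  \esum_(i in [set: T]) (r%:E * a i) = r%:E * \esum_(i in [set: T]) a i.
Proof.
move=> r0 a0; rewrite /esum -ereal_supZl//; last first.
  by apply/set0P; exists 0; exists set0; [exact: fsets_set0|rewrite fsbig_set0].
congr ereal_sup; apply/seteqP; split => _ /= [A FA <-].
  by exists (\sum_(x \in A) a x); [exists A|rewrite ge0_mule_fsumr].
by case: FA => [X FX <-]; exists X => //; rewrite ge0_mule_fsumr.
Qed.

Lemma esum_point (T : choiceType) (t : T) (c : \bar R) :
  0 <= c -> \esum_(i in [set: T]) (if i == t then c else 0) = c.
Proof.
move=> c0; rewrite -[RHS](esum_set1 (t:=t) (a:=fun _ => c))// [RHS]esum_mkcond.
apply: eq_esum => i _; rewrite (_ : (i \in [set t]) = (i == t))//.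
by apply/idP/idP; rewrite inE /= => /eqP.
Qed.

Lemma esum_term_le (T : choiceType) (a : T -> \bar R) t :
  (forall i, 0 <= a i) -> a t <= \esum_(i in [set: T]) a i.
Proof.
move=> a0; rewrite -(esum_set1 (t:=t) (a:=a))// esum_mkcond.
by apply: le_esum => i _; case: ifP.
Qed.

Lemma esum_le_eq (T : choiceType) (f g : T -> R) :
  (forall t, 0 <= f t <= g t)%R ->
  \esum_(t in [set: T]) (f t)%:E = \esum_(t in [set: T]) (g t)%:E ->
  \esum_(t in [set: T]) (g t)%:E < +oo -> forall t, f t = g t.
Proof.
move=> fg E glt t.
have d0 t' : 0 <= (g t' - f t')%:E.
  by case/andP: (fg t') => _; rewrite lee_fin subr_ge0.
have ffin : \esum_(t in [set: T]) (f t)%:E \is a fin_num.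
  rewrite ge0_fin_numE; first by rewrite E.
  by apply: esum_ge0 => t' _; case/andP: (fg t') => ? _; rewrite lee_fin.
have split_g : \esum_(t in [set: T]) (g t)%:E =
    \esum_(t in [set: T]) (f t)%:E + \esum_(t in [set: T]) (g t - f t)%:E.
  rewrite -esumD => [|t' _|t' _] //; last by case/andP: (fg t') => ? _.
  by apply: eq_esum => i _; rewrite -EFinD addrC subrK.
have gap0 : \esum_(t in [set: T]) (g t - f t)%:E = 0.
  set D := \esum_(t in [set: T]) (g t - f t)%:E.
  by rewrite -[D](addeK _ ffin) (addeC D) -split_g -E subee.
have := esum_term_le t d0; rewrite gap0 lee_fin subr_le0 => gf.
by apply/eqP; rewrite eq_le gf andbT; case/andP: (fg t).
Qed.

Lemma esum_fibres (A B : choiceType) (f : A -> B) (h : A -> \bar R) :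
  (forall a, 0 <= h a) ->
  \esum_(b in [set: B]) \esum_(a in [set: A]) (if f a == b then h a else 0) =
  \esum_(a in [set: A]) h a.
Proof.
move=> h0; rewrite esum_swap; last by move=> *; case: ifP.
apply: eq_esum => a _; rewrite -[RHS](esum_point (f a) (h0 a)).
by apply: eq_esum => b _; rewrite eq_sym.
Qed.

End NonnegativeSums.

Definition stationary_for (R : realType) (T : choiceType)
    (P : T -> T -> R) (pi : T -> R) : Prop :=
  [/\ (forall w, 0 <= pi w),
      (\esum_(w in [set: T]) (pi w)%:E = 1)%E &
      (forall w', (pi w')%:E = \esum_(w in [set: T]) (pi w * P w w')%:E)].

Section Kernel.
Variables (R : realType) (T : choiceType) (P : T -> T -> R).
Hypothesis P_ge0 : forall w t, 0 <= P w t.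
Hypothesis P_row : forall w, (\esum_(t in [set: T]) (P w t)%:E = 1)%E.

Inductive leads_to (o : T) : T -> Prop :=
| leads_here : leads_to o o
| leads_step w t : 0 < P w t -> leads_to o t -> leads_to o w.

Lemma esum_mass_step (f : T -> R) : (forall w, 0 <= f w) ->
  (\esum_(t in [set: T]) \esum_(w in [set: T]) (f w * P w t)%:E =
   \esum_(w in [set: T]) (f w)%:E)%E.
Proof.
move=> f0; rewrite -esum_swap => [|w t]; last by rewrite lee_fin mulr_ge0.
apply: eq_esum => w _; under eq_esum do rewrite EFinM.
by rewrite esumZl// => [|t]; rewrite ?P_row ?mule1// lee_fin.
Qed.

Lemma leads_to_positive (g : T -> R) o w :
  (forall w t, g w * P w t <= g t) -> leads_to o w -> 0 < g w -> 0 < g o.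
Proof.
move=> g_step; elim=> [//|{}w t Pwt _ IH] gw; apply: IH.
by apply: lt_le_trans (g_step w t); rewrite mulr_gt0.
Qed.

Lemma excess_step (pi mu : T -> R) :
  stationary_for P pi -> (forall w, 0 <= mu w <= pi w) ->
  (forall t, \esum_(w in [set: T]) (mu w * P w t)%:E = (mu t)%:E)%E ->
  forall w t, (pi w - mu w) * P w t <= pi t - mu t.
Proof.
move=> [_ _ pi_inv] mu_le mu_inv w t.
have exc0 w' : (0 <= ((pi w' - mu w') * P w' t)%:E)%E.
  by case/andP: (mu_le w') => _ ?; rewrite lee_fin mulr_ge0 ?subr_ge0.
have pi_split : (pi t)%:E = ((mu t)%:E +
    \esum_(w in [set: T]) ((pi w - mu w) * P w t)%:E)%E.
  rewrite pi_inv -mu_inv -esumD => [|w' _|//].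
    by apply: eq_esum => i _; rewrite -EFinD -mulrDl addrC subrK.
  by case/andP: (mu_le w') => ? _; rewrite lee_fin mulr_ge0.
have : ((mu t)%:E + ((pi w - mu w) * P w t)%:E <= (pi t)%:E)%E.
  by rewrite pi_split leeD2l// esum_term_le.
by rewrite -EFinD lee_fin -lerBrDl.
Qed.

Lemma stationary_le_eq (pi1 pi2 : T -> R) :
  stationary_for P pi1 -> stationary_for P pi2 ->
  (forall w, pi1 w <= pi2 w) -> forall w, pi1 w = pi2 w.
Proof.
move=> [p1 s1 _] [_ s2 _] le12; apply: esum_le_eq => [w||].
- by rewrite p1 le12.
- by rewrite s1 s2.
- by rewrite s2 ltry.
Qed.

Section TwoStationary.
Variables pi1 pi2 : T -> R.
Hypothesis st1 : stationary_for P pi1.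
Hypothesis st2 : stationary_for P pi2.

Let mu w := Num.min (pi1 w) (pi2 w).

Let mu_le1 w : 0 <= mu w <= pi1 w.
Proof. by case: st1 st2 => p1 _ _ [p2 _ _]; rewrite le_min p1 p2 ge_min lexx. Qed.

Let mu_le2 w : 0 <= mu w <= pi2 w.
Proof. by case: st1 st2 => p1 _ _ [p2 _ _]; rewrite le_min p1 p2 ge_min lexx orbT. Qed.

(* The minimum of two stationary distributions is invariant: one step maps it
   below itself (below both pi1 and pi2) while preserving its finite mass. *)
Let mu_invariant :
  forall t, (\esum_(w in [set: T]) (mu w * P w t)%:E = (mu t)%:E)%E.
Proof.
have [_ s1 inv1] := st1; have [_ _ inv2] := st2.
pose muP t := \esum_(w in [set: T]) (mu w * P w t)%:E.
have muP0 t : (0 <= muP t)%E.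
  by apply: esum_ge0 => w _; case/andP: (mu_le1 w) => ? _; rewrite lee_fin mulr_ge0.
have muP_le t : (muP t <= (mu t)%:E)%E.
  have le_pi (pi : T -> R) : (forall w, mu w <= pi w) ->
      (muP t <= \esum_(w in [set: T]) (pi w * P w t)%:E)%E.
    by move=> le_mu; apply: le_esum => w _; rewrite lee_fin ler_wpM2r.
  rewrite /mu minEle; case: ifP => _.
    by rewrite inv1 le_pi // => w; case/andP: (mu_le1 w).
  by rewrite inv2 le_pi // => w; case/andP: (mu_le2 w).
have muPE t : (fine (muP t))%:E = muP t.
  by rewrite fineK// ge0_fin_numE// (le_lt_trans (muP_le t)) ?ltry.
suff fine_mu : forall t, fine (muP t) = mu t by move=> t; rewrite -fine_mu muPE.
apply: esum_le_eq => [t||].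
- by rewrite -!lee_fin muPE muP0 muP_le.
- by under eq_esum do rewrite muPE; rewrite esum_mass_step // => w; case/andP: (mu_le1 w).
- apply: (@le_lt_trans _ _ 1%E); last exact: ltry.
  by rewrite -s1; apply: le_esum => w _; rewrite lee_fin; case/andP: (mu_le1 w).
Qed.

(* If o is reachable from everywhere and pi1 o <= pi2 o, then pi1 <= pi2:
   the excess pi1 - min(pi1, pi2) vanishes at o, hence everywhere. *)
Lemma stationary_le_from_root o :
  (forall w, leads_to o w) -> pi1 o <= pi2 o -> forall w, pi1 w <= pi2 w.
Proof.
move=> reach le_o w; have mu_o : mu o = pi1 o by rewrite /mu minEle le_o.
apply: le_trans (proj2 (andP (mu_le2 w))).
rewrite -subr_le0 leNgt; apply/negP => excess_pos.
have := leads_to_positive (excess_step st1 mu_le1 mu_invariant) (reach w) excess_pos.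
by rewrite mu_o subrr ltxx.
Qed.

End TwoStationary.

Lemma stationary_unique o (pi1 pi2 : T -> R) :
  (forall w, leads_to o w) ->
  stationary_for P pi1 -> stationary_for P pi2 -> forall w, pi1 w = pi2 w.
Proof.
move=> reach st1 st2; case/orP: (le_total (pi1 o) (pi2 o)) => [le12|le21].
  exact: stationary_le_eq st1 st2 (stationary_le_from_root st1 st2 reach le12).
move=> w; symmetry.
exact: stationary_le_eq st2 st1 (stationary_le_from_root st2 st1 reach le21) w.
Qed.

End Kernel.

Definition distr_image (R : realType) (S T : choiceType) (f : S -> T)
    (pi : S -> R) (v : T) : R :=
  fine (\esum_(w in [set: S]) (if f w == v then (pi w)%:E else 0))%E.

Section DistrImage.
Local Open Scope ereal_scope.
Variables (R : realType) (S T : choiceType) (f : S -> T) (pi : S -> R).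
Hypothesis pi_ge0 : forall w, (0 <= pi w)%R.
Hypothesis pi_fin : \esum_(w in [set: S]) (pi w)%:E < +oo.

Lemma distr_imageE v : (distr_image f pi v)%:E =
  \esum_(w in [set: S]) (if f w == v then (pi w)%:E else 0).
Proof.
have fib0 : 0 <= \esum_(w in [set: S]) (if f w == v then (pi w)%:E else 0).
  by apply: esum_ge0 => w _; case: ifP; rewrite ?lee_fin.
rewrite fineK// ge0_fin_numE// (le_lt_trans _ pi_fin)//.
by apply: le_esum => w _; case: ifP; rewrite ?lee_fin.
Qed.

Lemma distr_image_ge0 v : (0 <= distr_image f pi v)%R.
Proof.
by rewrite -lee_fin distr_imageE; apply: esum_ge0 => w _; case: ifP; rewrite ?lee_fin.
Qed.

Lemma esum_distr_image (g : T -> R) : (forall v, 0 <= g v)%R ->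
  \esum_(v in [set: T]) (distr_image f pi v * g v)%:E =
  \esum_(w in [set: S]) (pi w * g (f w))%:E.
Proof.
move=> g0; rewrite -(esum_fibres f) => [|w]; last by rewrite lee_fin mulr_ge0.
apply: eq_esum => v _; rewrite EFinM distr_imageE muleC -esumZl// => [|w].
  by apply: eq_esum => w _; case: eqP => [<-|_]; rewrite ?mule0// -EFinM mulrC.
by case: ifP; rewrite ?lee_fin.
Qed.

End DistrImage.

Lemma distr_image_stationary (R : realType) (S T : choiceType) (f : S -> T)
    (P : S -> S -> R) (Q : T -> T -> R) (pi : S -> R) :
  (forall w w', 0 <= P w w') -> (forall v v', 0 <= Q v v') ->
  (forall w v', (\esum_(w' in [set: S])
      (if f w' == v' then (P w w')%:E else 0) = (Q (f w) v')%:E)%E) ->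
  stationary_for P pi -> stationary_for Q (distr_image f pi).
Proof.
move=> P0 Q0 lumpable [pi0 pi1 pi_inv].
have pi_fin : (\esum_(w in [set: S]) (pi w)%:E < +oo)%E by rewrite pi1 ltry.
split=> [v|| v'].
- exact: distr_image_ge0.
- under eq_esum do rewrite -[distr_image _ _ _]mulr1.
  by rewrite esum_distr_image//; under eq_esum do rewrite mulr1.
rewrite esum_distr_image// distr_imageE//.
have mass_in_fibre w' : (if f w' == v' then (pi w')%:E else 0)%E =
    \esum_(w in [set: S]) (if f w' == v' then (pi w * P w w')%:E else 0)%E.
  by case: ifP => _; rewrite ?pi_inv// esum1.
under eq_esum do rewrite mass_in_fibre.
rewrite esum_swap => [|w w']; last by case: ifP; rewrite ?lee_fin ?mulr_ge0.
apply: eq_esum => w _; rewrite EFinM -lumpable -esumZl// => [|w']; last first.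
  by case: ifP; rewrite ?lee_fin.
by apply: eq_esum => w' _; case: ifP; rewrite ?mule0 -?EFinM.
Qed.

Section FCFSChain.
Variables (R : realType) (V : finType) (e : rel V) (alpha : V -> R).
Local Notation P := (fcfs_trans e alpha).

Lemma fcfs_step_oldest (a b : V) t :
  symmetric e -> e a b -> fcfs_step e (a :: t) b = t.
Proof. by move=> e_sym ab; rewrite /fcfs_step /= e_sym ab /= drop0. Qed.

(* If every class has a neighbour, the empty word is reachable from every
   word: items can be matched one at a time, oldest first. *)
Lemma fcfs_leads_to_empty :
  symmetric e -> (forall a, exists b, e a b) -> (forall v, 0 < alpha v) ->
  forall w, leads_to P [::] w.
Proof.
move=> e_sym nbr alpha_gt0; elim=> [|a t IH]; first exact: leads_here.
have [b ab] := nbr a; apply: (leads_step (t := t)) IH.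
apply: lt_le_trans (alpha_gt0 b) _; rewrite /fcfs_trans (bigD1 b) /=.
  by rewrite lerDl sumr_ge0 // => i _; exact/ltW.
by rewrite fcfs_step_oldest.
Qed.

Hypothesis alpha_ge0 : forall v, 0 <= alpha v.

Lemma fcfs_trans_ge0 w w' : 0 <= P w w'.
Proof. exact: sumr_ge0. Qed.

Lemma esum_fcfs_trans w (F : seq V -> \bar R) : (forall w', 0 <= F w')%E ->
  (\esum_(w' in [set: seq V]) ((P w w')%:E * F w') =
   \sum_(i : V) (alpha i)%:E * F (fcfs_step e w i))%E.
Proof.
move=> F0; have term w' : ((P w w')%:E * F w' = \sum_(i : V)
    if w' == fcfs_step e w i then (alpha i)%:E * F (fcfs_step e w i) else 0)%E.
  rewrite /fcfs_trans -sumEFin ge0_sume_distrl => [|i _]; last by rewrite lee_fin.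
  by rewrite big_mkcond; apply: eq_bigr => i _; rewrite eq_sym; case: eqP => [->|].
under eq_esum do rewrite term.
rewrite esum_sum => [|w' i _ _]; last by case: ifP; rewrite ?mule_ge0 ?lee_fin.
by apply: eq_bigr => i _; rewrite esum_point// mule_ge0 ?lee_fin.
Qed.

Hypothesis alpha_sum : \sum_(v : V) alpha v = 1.

Lemma fcfs_trans_row w : (\esum_(w' in [set: seq V]) (P w w')%:E = 1)%E.
Proof.
under eq_esum do rewrite -[(P w _)%:E]mule1.
rewrite esum_fcfs_trans//; under eq_bigr do rewrite mule1.
by rewrite sumEFin alpha_sum.
Qed.

End FCFSChain.

Lemma fcfs_step_map (U V : finType) (eU : rel U) (eV : rel V) (phi : U -> V) :
  (forall u u', eU u u' = eV (phi u) (phi u')) ->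
  forall w u, map phi (fcfs_step eU w u) = fcfs_step eV (map phi w) (phi u).
Proof.
move=> he w u; rewrite /fcfs_step find_map size_map.
have -> : find (preim phi (eV (phi u))) w = find (eU u) w.
  by apply: eq_find => u' /=; rewrite he.
by case: ifP => _; rewrite ?map_cat ?map_take ?map_drop ?map_rcons.
Qed.

Section Decomposition.
Variables (R : realType) (V U : finType) (ex : rel V) (alpha : V -> R) (x : V)
  (eyz : rel U) (beta : U -> R) (y z : U) (phi : U -> V).
Hypothesis y_neq_z : y != z.
Hypothesis phi_y : phi y = x.
Hypothesis phi_z : phi z = x.
Hypothesis phi_x : forall u, phi u = x -> u = y \/ u = z.
Hypothesis phi_inj : {in [pred u | phi u != x] &, injective phi}.
Hypothesis phi_surj : forall v, v != x -> exists u, phi u = v.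
Hypothesis e_pullback : forall u u', eyz u u' = ex (phi u) (phi u').
Hypothesis beta_split : beta y + beta z = alpha x.
Hypothesis beta_phi : forall u, phi u != x -> beta u = alpha (phi u).
Hypothesis beta_ge0 : forall u, 0 <= beta u.

Lemma beta_fibre i : \sum_(u | phi u == i) beta u = alpha i.
Proof.
have [->|i_neq_x] := eqVneq i x.
  rewrite (bigD1 y) ?phi_y//= (bigD1 z) /=; last by rewrite phi_z eqxx eq_sym y_neq_z.
  rewrite big1 ?addr0// => u /andP[/andP[/eqP phi_u u_neq_y] u_neq_z].
  by case: (phi_x phi_u) => u_yz; move: u_neq_y u_neq_z; rewrite u_yz eqxx ?andbF.
have [u0 phi_u0] := phi_surj i_neq_x.
rewrite (bigD1 u0) ?phi_u0//= big1 ?addr0; first by rewrite beta_phi phi_u0.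
move=> u /andP[/eqP phi_u]; apply: contraNeq => _; apply/eqP/phi_inj.
- by rewrite inE /= phi_u.
- by rewrite inE /= phi_u0.
- by rewrite phi_u phi_u0.
Qed.

Lemma sum_beta_phi (g : V -> R) :
  \sum_(u : U) beta u * g (phi u) = \sum_(i : V) alpha i * g i.
Proof.
under [RHS]eq_bigr do rewrite -beta_fibre mulr_suml.
rewrite (exchange_big_dep xpredT) //=; apply: eq_bigr => u _.
by rewrite (big_pred1 (phi u)) // => i; rewrite eq_sym.
Qed.

Lemma fcfs_lumpable (w : seq U) (v' : seq V) :
  (\esum_(w' in [set: seq U]) (if map phi w' == v'
       then (fcfs_trans eyz beta w w')%:E else 0) =
   (fcfs_trans ex alpha (map phi w) v')%:E)%E.
Proof.
have indicator w' : ((if map phi w' == v' then (fcfs_trans eyz beta w w')%:E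
    else 0) = (fcfs_trans eyz beta w w')%:E * ((map phi w' == v')%:R)%:E)%E.
  by case: ifP; rewrite ?mule1 ?mule0.
under eq_esum do rewrite indicator.
rewrite esum_fcfs_trans //.
under eq_bigr do rewrite -EFinM (fcfs_step_map e_pullback).
rewrite sumEFin (sum_beta_phi (fun i => (fcfs_step ex (map phi w) i == v')%:R)).
rewrite /fcfs_trans [in RHS]big_mkcond /=; congr (_%:E); apply: eq_bigr => i _.
by case: ifP; rewrite ?mulr1 ?mulr0.
Qed.

(* Since G_yz is connected and has at least the two nodes y and z, no node of
   G_yz is isolated, hence neither is any node of G_x. *)
Lemma decomposition_no_isolated :
  (forall u u', connect eyz u u') -> forall a, exists b, ex a b.
Proof.
move=> eyz_conn a.
have [u phi_u] : exists u, phi u = a.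
  by have [->|a_neq_x] := eqVneq a x; [exists y | exact: phi_surj].
have [u' u_neq_u'] : exists u', u != u'.
  by case: (eqVneq u y) => [->|u_neq_y]; [exists z | exists y].
have /connectP[[|u'' p] /= path_uu' last_u'] := eyz_conn u u'.
  by rewrite last_u' eqxx in u_neq_u'.
by case/andP: path_uu' => edge _; exists (phi u''); rewrite -phi_u -e_pullback.
Qed.

End Decomposition.

Theorem mainTheorem12 (R : realType) (V U : finType)
    (ex : rel V) (alpha : V -> R) (x : V)
    (eyz : rel U) (beta : U -> R) (y z : U)
    (pix : seq V -> R) (piyz : seq U -> R) :
  matching_model ex alpha ->
  matching_model eyz beta ->
  decomposition ex alpha x eyz beta y z ->
  positive_recurrent ex alpha ->
  positive_recurrent eyz beta ->
  stationary ex alpha pix ->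
  stationary eyz beta piyz ->
  mean_length pix = mean_length piyz.
Proof.
move=> [ex_sym _ _ alpha_gt0 alpha_sum] [_ _ eyz_conn beta_gt0 _]
  [phi [[y_neq_z phi_y phi_z phi_x] [[phi_inj phi_surj e_pullback]
  [_ _ beta_split beta_phi]]]] _ _ st_x st_yz.
have alpha_ge0 v : 0 <= alpha v by exact: ltW.
have beta_ge0 u : 0 <= beta u by exact: ltW.
have lumpable := fcfs_lumpable y_neq_z phi_y phi_z phi_x phi_inj phi_surj
  e_pullback beta_split beta_phi beta_ge0.
have st_push : stationary ex alpha (distr_image (map phi) piyz).
  exact: distr_image_stationary (fcfs_trans_ge0 eyz beta_ge0)
    (fcfs_trans_ge0 ex alpha_ge0) lumpable st_yz.
have reach := fcfs_leads_to_empty ex_sym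
  (decomposition_no_isolated y_neq_z phi_y phi_surj e_pullback eyz_conn)
  alpha_gt0.
have -> : pix = distr_image (map phi) piyz.
  apply: funext; apply: (stationary_unique (fcfs_trans_ge0 ex alpha_ge0)
    (fcfs_trans_row ex alpha_ge0 alpha_sum) reach) st_x st_push.
have [piyz_ge0 piyz_mass _] := st_yz.
rewrite /mean_length esum_distr_image ?piyz_mass ?ltry//.
by under eq_esum do rewrite size_map.
Qed.
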